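(* Let $\mathcal{R}$ be a non-commutative prime ring of characteristic different from $2$, with Utumi quotient ring $\mathcal{U}$ and extended centroid $\mathcal{C}$, and let $f(\zeta_1,\ldots,\zeta_n)$ be a multilinear polynomial over $\mathcal{C}$ which is not central-valued on $\mathcal{R}$. Let $a_1,\ldots,a_6\in\mathcal{U}$ be such that $$a_1f(\zeta)^2+a_2f(\zeta)a_3f(\zeta)+f(\zeta)a_5f(\zeta)a_6+f(\zeta)a_4f(\zeta)-a_5f(\zeta)^2a_6=0$$ for all $\zeta=(\zeta_1,\ldots,\zeta_n)\in\mathcal{R}^n$. If $\mathcal{R}$ does not satisfy any nontrivial generalized polynomial identity, then one of the following holds: (1) $a_2,a_5\in\mathcal{C}$; (2) $a_2,a_6\in\mathcal{C}$; (3) $a_3,a_5\in\mathcal{C}$; (4) $a_3,a_6\in\mathcal{C}$.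
   Context: A ring $\mathcal{R}$ is prime if $x\mathcal{R}y=0$ implies $x=0$ or $y=0$. $\mathcal{U}$ is the Utumi quotient ring of $\mathcal{R}$ and $\mathcal{C}$, its center, the extended centroid. A generalized polynomial identity is an element of the free product $\mathcal{U}*_{\mathcal{C}}\mathcal{C}\{X\}$ (noncommutative polynomials with coefficients from $\mathcal{U}$ interspersed) vanishing on all substitutions from $\mathcal{R}$; it is nontrivial if it is a nonzero element of that free product. A multilinear polynomial over $\mathcal{C}$ has each variable exactly once in every monomial; non-central means its values on $\mathcal{R}$ do not all lie in $\mathcal{C}$. *)

From HB Require Import structures.
From mathcomp Require Import all_boot all_order all_algebra all_fingroup.
Set Implicit Arguments. Unset Strict Implicit. Unset Printing Implicit Defensive.
Import Order.TTheory GRing.Theory Num.Theory.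
Local Open Scope ring_scope.

(* Conventions: the Utumi quotient ring U is a (unital, nonzero) ring, and the
   prime ring R is modelled as a (possibly non-unital) subring of U, given as a
   predicate R : U -> Prop.  U is pinned down by the standard characterising
   axioms of the (maximal right) Utumi quotient ring. *)

Section Defs.
Variable U : nzRingType.

Definition subring_of (R : U -> Prop) : Prop :=
  [/\ R 0, (forall x y, R x -> R y -> R (x - y)) &
      (forall x y, R x -> R y -> R (x * y))].

Definition prime_ring (R : U -> Prop) : Prop :=
  forall x y, R x -> R y -> (forall r, R r -> x * r * y = 0) -> x = 0 \/ y = 0.

Definition right_ideal_of (R I : U -> Prop) : Prop :=
  [/\ (forall x, I x -> R x), I 0, (forall x y, I x -> I y -> I (x - y)) &
      (forall x r, I x -> R r -> I (x * r))].

Definition dense_in (R I : U -> Prop) : Prop :=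
  forall r1 r2, R r1 -> R r2 -> r1 <> 0 ->
    exists r, [/\ R r, r1 * r <> 0 & I (r2 * r)].

Definition dense_right_ideal (R I : U -> Prop) : Prop :=
  right_ideal_of R I /\ dense_in R I.

Definition is_utumi_quotient (R : U -> Prop) : Prop :=
  [/\ subring_of R,
      (forall q, exists I, dense_right_ideal R I /\ forall x, I x -> R (q * x)),
      (forall q I, dense_right_ideal R I -> (forall x, I x -> q * x = 0) -> q = 0) &
      (forall I (phi : U -> U), dense_right_ideal R I ->
         (forall x, I x -> R (phi x)) ->
         (forall x y, I x -> I y -> phi (x + y) = phi x + phi y) ->
         (forall x r, I x -> R r -> phi (x * r) = phi x * r) ->
         exists q, forall x, I x -> phi x = q * x)].

(* extended centroid C = center of U *)
Definition ext_centroid (c : U) : Prop := forall u : U, c * u = u * c.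

Definition mlin_eval (n : nat) (alpha : 'S_n -> U) (z : 'I_n -> U) : U :=
  \sum_(s : 'S_n) alpha s * \prod_(i < n) z (s i).

(* Generalized monomials a0 x_{v1} a1 x_{v2} ... x_{vk} ak, stored as
   (a0, [:: (v1,a1); ...; (vk,ak)]) *)
Definition gmono := (U * seq (nat * U))%type.

Definition gmono_eval (x : nat -> U) (m : gmono) : U :=
  m.1 * \prod_(p <- m.2) (x p.1 * p.2).

Definition gsum := seq (int * gmono).

Definition gsum_eval (x : nat -> U) (s : gsum) : U :=
  \sum_(t <- s) (gmono_eval x t.2) *~ t.1.

Definition gcoef (s : gsum) (m : gmono) : int :=
  \sum_(t <- s | t.2 == m) t.1.

(* coefficient at position l (0 = a0, l+1 = a_{l+1}) *)
Definition gget (m : gmono) (l : nat) : U :=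
  if l is l'.+1 then (nth (0%N, 0) m.2 l').2 else m.1.

Definition gset (m : gmono) (l : nat) (a : U) : gmono :=
  if l is l'.+1 then (m.1, set_nth (0%N, 0) m.2 l' ((nth (0%N, 0) m.2 l').1, a))
  else (a, m.2).

(* defining relations of  (+)_w  U (x)_C ... (x)_C U  =  U *_C C{X}:
   additivity in each slot and C-balancedness between adjacent slots *)
Definition grelator (r : gsum) : Prop :=
  (exists m l a b, (l <= size m.2)%N /\
     r = [:: ((1:int), gset m l (a + b)); (-1, gset m l a); (-1, gset m l b)]) \/
  (exists m l c, (l < size m.2)%N /\ ext_centroid c /\
     r = [:: ((1:int), gset m l (gget m l * c)); (-1, gset m l.+1 (c * gget m l.+1))]).

(* the element of U *_C C{X} represented by s is zero *)
Definition fp_zero (s : gsum) : Prop :=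
  exists rs : seq (int * gsum),
    (forall k r, (k, r) \in rs -> grelator r) /\
    forall m, gcoef s m = \sum_(kr <- rs) kr.1 * gcoef kr.2 m.

Definition is_GPI (R : U -> Prop) (s : gsum) : Prop :=
  forall x : nat -> U, (forall i, R (x i)) -> gsum_eval x s = 0.

Definition no_nontrivial_GPI (R : U -> Prop) : Prop :=
  forall s, is_GPI R s -> fp_zero s.

End Defs.

(* Since R satisfies no nontrivial GPI, the generalized polynomial expressing the
   hypothesis (with f expanded into its monomials) is zero in U *_C C{X}.  It therefore
   vanishes under every interpretation of U *_C C{X} in a ring S: a ring morphism
   iota : U -> S together with values X_i commuting with iota(C).  Take for S the
   2n x 2n matrices over U, for iota the scalar embedding and for X_i weighted adjacency
   matrices of a cycle labelled by a permutation s with alpha_s <> 0 and carrying two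
   arbitrary weights u, v: the (0,0) entry of the image is
   alpha_s^2 (a1 u v + a2 u a3 v + u a5 v a6 + u a4 v - a5 u v a6), so this identity
   holds on all of U.  Standard prime ring arguments then make a5 or a6 central, and
   then a2 or a3. *)

From HB Require Import structures.
From mathcomp Require Import all_boot all_order all_algebra all_fingroup.
From mathcomp Require Import zify.
From Stdlib Require Import Classical.
Import GRing.Theory.
Local Open Scope ring_scope.

Section GsumInterpretation.
Context {U S : nzRingType}.
Variables (iota : U -> S) (X : nat -> S).
Hypothesis iotaD : forall a b, iota (a + b) = iota a + iota b.
Hypothesis iotaM : forall a b, iota (a * b) = iota a * iota b.
Hypothesis iota_centroid : forall c v, ext_centroid c -> iota c * X v = X v * iota c.

Definition gmono_interp (m : gmono U) : S :=
  iota m.1 * \prod_(p <- m.2) (X p.1 * iota p.2).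

Definition gsum_interp (s : gsum U) : S := \sum_(t <- s) gmono_interp t.2 *~ t.1.

Local Notation interp_seq ps := (\prod_(p <- ps) (X p.1 * iota p.2)).

Lemma gmono_interp_gsetS (m : gmono U) l y : (l < size m.2)%N ->
  gmono_interp (gset m l.+1 y) =
  iota m.1 * interp_seq (take l m.2) * X (nth (0%N, 0) m.2 l).1 * iota y
  * interp_seq (drop l.+1 m.2).
Proof.
by move=> lt_l; rewrite /gmono_interp /= set_nthE lt_l big_cat big_cons !mulrA.
Qed.

Lemma gmono_interp_slot {m : gmono U} {l} : (l <= size m.2)%N ->
  exists L R, forall y, gmono_interp (gset m l y) = L * iota y * R.
Proof.
case: l => [|l] le_l; first by exists 1, (interp_seq m.2) => y; rewrite mul1r.
by eexists; eexists => y; rewrite gmono_interp_gsetS.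
Qed.

Lemma gmono_interp_adjacent_slots {m : gmono U} {l} : (l < size m.2)%N ->
  exists L R v,
    (forall y, gmono_interp (gset m l y) = L * iota y * X v * iota (gget m l.+1) * R) /\
    (forall y, gmono_interp (gset m l.+1 y) = L * iota (gget m l) * X v * iota y * R).
Proof.
case: l => [|l] lt_l.
  case: m lt_l => a0 [|e ps] //= _; exists 1, (interp_seq ps), e.1.
  by split=> y; rewrite /gmono_interp /= big_cons !mul1r !mulrA.
have lt_l' : (l < size m.2)%N by apply: ltnW.
exists (iota m.1 * interp_seq (take l m.2) * X (nth (0%N, 0) m.2 l).1),
  (interp_seq (drop l.+2 m.2)), (nth (0%N, 0) m.2 l.+1).1.
split=> y; rewrite gmono_interp_gsetS //.
  by rewrite (drop_nth (0%N, 0) lt_l) big_cons !mulrA.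
by rewrite (take_nth (0%N, 0) lt_l') -cats1 big_cat big_seq1 !mulrA.
Qed.

Lemma gsum_interp_grelator r : grelator r -> gsum_interp r = 0.
Proof.
case=> [[m [l [a [b [le_l ->]]]]] | [m [l [c [lt_l [cC ->]]]]]].
  have [L [R interpE]] := gmono_interp_slot le_l.
  rewrite /gsum_interp !big_cons big_nil /= !interpE mulr1z !mulrN1z addr0 iotaD.
  by rewrite mulrDr mulrDl addrACA !subrr addr0.
have [L [R [v [interpE interpSE]]]] := gmono_interp_adjacent_slots lt_l.
rewrite /gsum_interp !big_cons big_nil /= interpE interpSE mulr1z mulrN1z addr0.
rewrite !iotaM !mulrA -[L * _ * iota c * X v]mulrA iota_centroid //.
by rewrite !mulrA subrr.
Qed.

Lemma gsum_interp_gcoef {s : gsum U} {M : seq (gmono U)} : uniq M ->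
  {subset map snd s <= M} -> gsum_interp s = \sum_(m <- M) gmono_interp m *~ gcoef s m.
Proof.
move=> uniqM; elim: s => [|t s IHs] sM.
  by rewrite /gsum_interp big_nil big1 // => m _; rewrite /gcoef big_nil mulr0z.
have Mt : t.2 \in M by apply: sM; rewrite inE eqxx.
rewrite /gsum_interp big_cons -/(gsum_interp s) IHs; last first.
  by move=> x sx; apply: sM; rewrite inE sx orbT.
have gcoef_cons m : gcoef (t :: s) m = t.1 *+ (t.2 == m) + gcoef s m.
  by rewrite /gcoef big_cons; case: eqP; rewrite ?add0r.
under [RHS]eq_bigr => m _ do rewrite gcoef_cons mulrzDr.
rewrite big_split /=; congr (_ + _).
rewrite (bigD1_seq t.2) //= eqxx mulr1n big1 ?addr0 // => m /negbTE.
by rewrite eq_sym => ->; rewrite mulr0n mulr0z.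
Qed.

Lemma gsum_interp_fp_zero (s : gsum U) : fp_zero s -> gsum_interp s = 0.
Proof.
case=> rs [rs_rel coefE].
set M := undup (map snd s ++ flatten [seq map snd kr.2 | kr <- rs]).
have uniqM : uniq M by apply: undup_uniq.
rewrite (gsum_interp_gcoef uniqM); last by move=> x sx; rewrite mem_undup mem_cat sx.
under eq_bigr => m _ do rewrite coefE mulrz_sumr.
rewrite exchange_big /= big_seq big1 // => [[k r]] rs_kr /=.
under eq_bigr => m _ do rewrite mulrC mulrzA.
rewrite -mulrz_suml -(gsum_interp_gcoef uniqM).
  by rewrite gsum_interp_grelator ?mul0rz //; apply: rs_rel rs_kr.
move=> x rx; rewrite mem_undup mem_cat; apply/orP; right.
by apply/flattenP; exists (map snd r) => //; apply/mapP; exists (k, r).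
Qed.

Lemma gsum_interp_cat s1 s2 :
  gsum_interp (s1 ++ s2) = gsum_interp s1 + gsum_interp s2.
Proof. by rewrite /gsum_interp big_cat. Qed.

Definition gsum_opp (s : gsum U) : gsum U := [seq (- t.1, t.2) | t <- s].

Lemma gsum_interp_opp s : gsum_interp (gsum_opp s) = - gsum_interp s.
Proof. by rewrite /gsum_interp big_map -sumrN; apply: eq_bigr => t _; rewrite mulrNz. Qed.

End GsumInterpretation.

Section QuadraticEncoding.
Context {U : nzRingType} {n' : nat}.
Variable alpha : 'S_n'.+1 -> U.

Definition var_block (s : 'S_n'.+1) (c : U) : seq (nat * U) :=
  [seq (val (s i), if i == ord_max then c else 1) | i <- index_enum 'I_n'.+1].

(* p f q f r, with f expanded into its monomials *)
Definition quad_gsum (p q r : U) : gsum U :=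
  [seq (1%:Z, (p * alpha st.1, var_block st.1 (q * alpha st.2) ++ var_block st.2 r)) |
     st <- [seq (s, t) | s <- index_enum 'S_n'.+1, t <- index_enum 'S_n'.+1]].

Definition identity_gsum (a1 a2 a3 a4 a5 a6 : U) : gsum U :=
  quad_gsum a1 1 1 ++ quad_gsum a2 a3 1 ++ quad_gsum 1 a5 a6 ++ quad_gsum 1 a4 1
  ++ gsum_opp (quad_gsum a5 1 a6).

Context {S : nzRingType}.
Variables (iota : U -> S) (X : nat -> S).
Hypothesis iotaM : forall a b, iota (a * b) = iota a * iota b.
Hypothesis iota1 : iota 1 = 1.

Definition mlin_interp : S :=
  \sum_(s : 'S_n'.+1) iota (alpha s) * \prod_(i < n'.+1) X (s i).

Lemma interp_var_block s c :
  \prod_(p <- var_block s c) (X p.1 * iota p.2) = \prod_(i < n'.+1) X (s i) * iota c.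
Proof.
rewrite big_map big_ord_recr [in RHS]big_ord_recr /= eqxx mulrA.
congr (_ * _ * _); apply: eq_bigr => i _.
by rewrite ifN ?iota1 ?mulr1 // -val_eqE /= neq_ltn ltn_ord.
Qed.

Lemma interp_quad_gsum p q r :
  gsum_interp iota X (quad_gsum p q r) =
  iota p * mlin_interp * iota q * mlin_interp * iota r.
Proof.
rewrite /gsum_interp big_map big_allpairs exchange_big /mlin_interp.
rewrite mulr_sumr !mulr_suml; apply: eq_bigr => s _.
rewrite mulr_sumr !mulr_suml; apply: eq_bigr => t _.
by rewrite /= mulr1z /gmono_interp big_cat /= !interp_var_block !iotaM !mulrA.
Qed.

Lemma interp_identity_gsum a1 a2 a3 a4 a5 a6 :
  let F := mlin_interp in
  gsum_interp iota X (identity_gsum a1 a2 a3 a4 a5 a6) =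
  iota a1 * F * F + iota a2 * F * iota a3 * F + F * iota a5 * F * iota a6
  + F * iota a4 * F - iota a5 * F * F * iota a6.
Proof.
rewrite /identity_gsum !gsum_interp_cat gsum_interp_opp !interp_quad_gsum iota1.
by rewrite !mulr1 !mul1r !addrA.
Qed.

End QuadraticEncoding.

Section RowDelta.
Context {U : nzRingType} {N' : nat}.
Implicit Types (A Y Z : 'M[U]_N'.+1) (a y z : U) (p q : 'I_N'.+1).

Lemma scalar_mx_mul_entry a A p q : (a%:M * A) p q = a * A p q.
Proof. by rewrite -mulmxE mul_scalar_mx mxE. Qed.

Lemma mul_scalar_mx_entry a A p q : (A * a%:M) p q = A p q * a.
Proof.
rewrite mxE (bigD1 q) //= mxE eqxx mulr1n big1 ?addr0 // => k /negbTE neq_kq.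
by rewrite mxE neq_kq mulr0n mulr0.
Qed.

Lemma scalar_mx_centroid_comm a A : ext_centroid a -> a%:M * A = A * a%:M.
Proof.
by move=> aC; apply/matrixP => p q; rewrite scalar_mx_mul_entry mul_scalar_mx_entry aC.
Qed.

Definition row_delta Y p y q := forall k, Y p k = y *+ (k == q).

Lemma row_delta_scalar a p : row_delta a%:M p a p.
Proof. by move=> k; rewrite mxE eq_sym. Qed.

Lemma row_delta_mul {Y Z p y z q} {q' : 'I_N'.+1} :
  row_delta Y p y q -> row_delta Z q z q' -> row_delta (Y * Z) p (y * z) q'.
Proof.
move=> rowY rowZ k; rewrite mxE (bigD1 q) //= rowY eqxx mulr1n rowZ mulrnAr.
by rewrite big1 ?addr0 // => r /negbTE neq_rq; rewrite rowY neq_rq mulr0n mul0r.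
Qed.

Lemma row_delta_add {Y Z p y z q} :
  row_delta Y p y q -> row_delta Z p z q -> row_delta (Y + Z) p (y + z) q.
Proof. by move=> rowY rowZ k; rewrite mxE rowY rowZ mulrnDl. Qed.

Lemma row_delta_opp {Y p y q} : row_delta Y p y q -> row_delta (- Y) p (- y) q.
Proof. by move=> rowY k; rewrite mxE rowY mulNrn. Qed.

Lemma row_delta_quad {F p q y z} a b c :
  row_delta F p y q -> row_delta F q z p ->
  row_delta (a%:M * F * b%:M * F * c%:M) p (a * y * b * z * c) p.
Proof.
move=> rowFp rowFq; apply: row_delta_mul (row_delta_scalar c p).
apply: row_delta_mul rowFq; apply: row_delta_mul (row_delta_scalar b q).
exact: row_delta_mul (row_delta_scalar a p) rowFp.
Qed.

Lemma row_delta0_eq0 p y : row_delta 0 p y p -> y = 0.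
Proof. by move=> /(_ p); rewrite mxE eqxx mulr1n => <-. Qed.

End RowDelta.

Section WalkMatrices.
Context {U : nzRingType} {N' n : nat}.
Variables (lab : 'I_N'.+1 -> 'I_n) (nxt : 'I_N'.+1 -> 'I_N'.+1) (w : 'I_N'.+1 -> U).

Definition walk_mx (j : 'I_n) : 'M[U]_N'.+1 :=
  \matrix_(p, q) (if (lab p == j) && (q == nxt p) then w p else 0).

Lemma walk_mxE j p q :
  walk_mx j p q = if (lab p == j) && (q == nxt p) then w p else 0.
Proof. exact: mxE. Qed.

Lemma prod_walk_mx k (G : 'I_k -> 'I_n) p q :
  (\prod_(i < k) walk_mx (G i)) p q =
  if (\big[andb/true]_(i < k) (lab (iter i nxt p) == G i)) && (q == iter k nxt p)
  then \prod_(i < k) w (iter i nxt p) else 0.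
Proof.
elim: k G p q => [|k IHk] G p q; first by rewrite !big_ord0 mxE eq_sym; case: eqP.
rewrite big_ord_recl mxE [in RHS]iterSr [in RHS]big_ord_recl [in RHS]big_ord_recl.
under [in RHS]eq_bigr => i _ do rewrite lift0 iterSr.
under [X in w _ * X]eq_bigr => i _ do rewrite lift0 iterSr.
change (iter ord0 nxt p) with p.
have [lab_p | /negbTE lab_p] /= := eqVneq (lab p) (G ord0); last first.
  by rewrite big1 // => r _; rewrite walk_mxE lab_p mul0r.
rewrite (bigD1 (nxt p)) //= walk_mxE lab_p !eqxx /= IHk [X in _ + X]big1 ?addr0.
  by case: ifP; rewrite ?mulr0.
by move=> r /negbTE neq_r; rewrite walk_mxE lab_p eqxx neq_r mul0r.
Qed.

End WalkMatrices.

Lemma val_iter_ordS N i (p : 'I_N) :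
  nat_of_ord (iter i (@ordS N) p) = ((p + i) %% N)%N.
Proof.
elim: i => [|i IHi] /=; first by rewrite addn0 modn_small.
by rewrite IHi -addn1 modnDml addn1 addnS.
Qed.

Section CycleModel.
Context {U : nzRingType} {n' : nat}.
Variables (alpha : 'S_n'.+1 -> U) (s : 'S_n'.+1) (u v : U).

(* The vertices of the cycle are labelled s 0, ..., s n', s 0, ..., s n', so the walk of
   length n'.+1 from 0 (resp. n'.+1) spells s, and it has weight u (resp. v). *)
Local Notation N := (n'.+1 + n').+1.
Local Notation cycle_next := (@ordS N).

Definition cycle_lab (p : 'I_N) : 'I_n'.+1 := s (inord (p %% n'.+1)).

Definition cycle_weight (p : 'I_N) : U :=
  if nat_of_ord p == 0 then u else if nat_of_ord p == n'.+1 then v else 1.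

Definition cycle_var (k : nat) : 'M[U]_N :=
  walk_mx cycle_lab cycle_next cycle_weight (inord k).

Definition cycle_mid : 'I_N := inord n'.+1.

Lemma val_cycle_mid : nat_of_ord cycle_mid = n'.+1.
Proof. by rewrite inordK // ltnS leq_addr. Qed.

Section HalfCycle.
Variable st : 'I_N.
Hypothesis st_half : (nat_of_ord st == 0) || (nat_of_ord st == n'.+1).

Lemma val_iter_half_cycle (i : 'I_n'.+1) :
  nat_of_ord (iter i cycle_next st) = (st + i)%N.
Proof.
rewrite val_iter_ordS modn_small //.
by have := ltn_ord i; case/orP: st_half => /eqP ->; lia.
Qed.

Lemma cycle_lab_walk (i : 'I_n'.+1) : cycle_lab (iter i cycle_next st) = s i.
Proof.
rewrite /cycle_lab val_iter_half_cycle.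
suff -> : ((st + i) %% n'.+1)%N = i by rewrite inord_val.
by case/orP: st_half => /eqP ->; rewrite ?add0n ?modnDl modn_small.
Qed.

Lemma cycle_weight_walk :
  \prod_(i < n'.+1) cycle_weight (iter i cycle_next st) = cycle_weight st.
Proof.
rewrite big_ord_recl big1 ?mulr1 // => i _.
rewrite /cycle_weight val_iter_half_cycle lift0.
by have := ltn_ord i; case/orP: st_half => /eqP ->; do 2!case: eqP => //; lia.
Qed.

Lemma row_delta_half_cycle :
  row_delta (mlin_interp alpha scalar_mx cycle_var) st
    (alpha s * cycle_weight st) (iter n'.+1 cycle_next st).
Proof.
have walkE (t : 'S_n'.+1) : (\prod_(i < n'.+1) cycle_var (t i)) =
    \prod_(i < n'.+1) walk_mx cycle_lab cycle_next cycle_weight (t i).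
  by apply: eq_bigr => i _; rewrite /cycle_var inord_val.
set en := iter n'.+1 _ st => k.
rewrite /mlin_interp summxE (bigD1 s) //= [X in _ + X]big1 ?addr0 => [|t neq_ts].
  rewrite scalar_mx_mul_entry walkE prod_walk_mx cycle_weight_walk big_andE.
  have -> : [forall i : 'I_n'.+1, cycle_lab (iter i cycle_next st) == s i].
    by apply/forallP => i; rewrite cycle_lab_walk.
  by rewrite eq_sym; case: eqP; rewrite ?mulr0.
rewrite scalar_mx_mul_entry walkE prod_walk_mx big_andE.
suff /negbTE -> : ~~ [forall i : 'I_n'.+1, cycle_lab (iter i cycle_next st) == t i].
  by rewrite mulr0.
apply/forallP => lab_t; move/eqP: neq_ts; apply; apply/permP => i.
by apply/esym/eqP; rewrite -cycle_lab_walk lab_t.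
Qed.

End HalfCycle.

Lemma row_delta_cycle_start :
  row_delta (mlin_interp alpha scalar_mx cycle_var) ord0 (alpha s * u) cycle_mid.
Proof.
have -> : cycle_mid = iter n'.+1 cycle_next ord0.
  by apply: ord_inj; rewrite val_cycle_mid val_iter_ordS modn_small // ltnS leq_addr.
exact: row_delta_half_cycle.
Qed.

Lemma row_delta_cycle_mid :
  row_delta (mlin_interp alpha scalar_mx cycle_var) cycle_mid (alpha s * v) ord0.
Proof.
have mid_half : (nat_of_ord cycle_mid == 0) || (nat_of_ord cycle_mid == n'.+1).
  by rewrite val_cycle_mid eqxx orbT.
have -> : ord0 = iter n'.+1 cycle_next cycle_mid.
  by apply: ord_inj; rewrite val_iter_ordS val_cycle_mid addnS modnn.
by have := row_delta_half_cycle _ mid_half; rewrite /cycle_weight val_cycle_mid eqxx.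
Qed.

Lemma row_delta_identity_cycle a1 a2 a3 a4 a5 a6 : ext_centroid (alpha s) ->
  row_delta (gsum_interp scalar_mx cycle_var (identity_gsum alpha a1 a2 a3 a4 a5 a6))
    ord0 (alpha s * alpha s * (a1 * u * v + a2 * u * a3 * v + u * a5 * v * a6
                                + u * a4 * v - a5 * u * v * a6)) ord0.
Proof.
move=> sC; have quad := row_delta_quad _ _ _ row_delta_cycle_start row_delta_cycle_mid.
have sandwich x y z :
    x * (alpha s * u) * y * (alpha s * v) * z = alpha s * alpha s * (x * u * y * v * z).
  by rewrite !mulrA -(sC x) -(sC (alpha s * x * u * y)) !mulrA.
rewrite /identity_gsum !gsum_interp_cat gsum_interp_opp.
rewrite !(interp_quad_gsum _ _ _ (@scalar_mxM _ _)) //.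
set F := mlin_interp _ _ _; set Fu := alpha s * u; set Fv := alpha s * v.
have -> : alpha s * alpha s * (a1 * u * v + a2 * u * a3 * v + u * a5 * v * a6
                                + u * a4 * v - a5 * u * v * a6) =
  a1 * Fu * 1 * Fv * 1 + (a2 * Fu * a3 * Fv * 1 + (1 * Fu * a5 * Fv * a6
    + (1 * Fu * a4 * Fv * 1 - a5 * Fu * 1 * Fv * a6))).
  by rewrite !sandwich !mulr1 !mul1r !mulrDr mulrN !addrA.
do 3!apply: row_delta_add (quad _ _ _) _.
exact: row_delta_add (quad _ _ _) (row_delta_opp (quad _ _ _)).
Qed.

End CycleModel.

Section PrimeUtumi.
Context {U : nzRingType} {R : U -> Prop}.
Hypotheses (utumiR : is_utumi_quotient R) (primeR : prime_ring R).

Lemma annihilator_R_eq0 {w : U} : (forall v, R v -> w * v = 0) -> w = 0.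
Proof.
move=> wR0; have [_ denseU annU _] := utumiR; have [I [denseI _]] := denseU 0.
have [[IR _ _ _] _] := denseI.
by apply: (annU _ I denseI) => x Ix; apply/wR0/IR.
Qed.

Lemma ext_centroid_of_commR {b : U} : (forall r, R r -> b * r = r * b) -> ext_centroid b.
Proof.
move=> bR x; have [_ denseU annU _] := utumiR; have [I [denseI xI]] := denseU x.
have [[IR _ _ _] _] := denseI.
apply/eqP; rewrite -subr_eq0; apply/eqP; apply: (annU _ I denseI) => y Iy.
by rewrite mulrBl -!mulrA (bR _ (xI y Iy)) (bR _ (IR y Iy)) mulrA subrr.
Qed.

Lemma ext_centroidPn {a : U} : ~ ext_centroid a -> exists2 r, R r & a * r <> r * a.
Proof.
move=> aNC; apply: NNPP => noR; apply/aNC/ext_centroid_of_commR => r Rr.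
by apply: NNPP => ar; apply: noR; exists r.
Qed.

(* U inherits primeness from R: pull q and w back into R through dense right ideals. *)
Lemma utumi_prime {q w : U} : (forall r, R r -> q * r * w = 0) -> q = 0 \/ w = 0.
Proof.
move=> qRw; have [_ denseU annU _] := utumiR.
have [I [denseI qI]] := denseU q; have [J [denseJ wJ]] := denseU w.
have [[IR _ _ IRmul] _] := denseI.
have [->|q_neq0] := classic (q = 0); [by left | right].
have [y Iy qy_neq0] : exists2 y, I y & q * y <> 0.
  apply: NNPP => qI0; apply: q_neq0; apply: (annU _ I denseI) => y Iy.
  by apply: NNPP => qy; apply: qI0; exists y.
apply: (annU _ J denseJ) => z Jz.
have qyRwz r : R r -> q * y * r * (w * z) = 0.
  by move=> Rr; rewrite !mulrA -(mulrA q) qRw ?mul0r //; apply/IR/IRmul.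
by case: (primeR _ _ (qI y Iy) (wJ z Jz) qyRwz).
Qed.

Lemma ext_centroid_mul_eq0 {c w : U} : ext_centroid c -> c * w = 0 -> c = 0 \/ w = 0.
Proof. by move=> cC cw0; apply: utumi_prime => r _; rewrite cC -mulrA cw0 mulr0. Qed.

Lemma identity_pv_qvb {p q b : U} :
  (forall v, R v -> p * v + q * v * b = 0) -> q = 0 \/ ext_centroid b.
Proof.
move=> pqb; have [[_ _ Rmul] _ _ _] := utumiR.
have [->|q_neq0] := classic (q = 0); [by left | right].
apply: ext_centroid_of_commR => r Rr.
have qRbr v : R v -> q * v * (r * b - b * r) = 0.
  move=> Rv; have e1 := pqb _ (Rmul _ _ Rv Rr).
  have e2 : (p * v + q * v * b) * r = 0 by rewrite pqb ?mul0r.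
  rewrite mulrDl in e2; rewrite !mulrA -{}e2 in e1; move/addrI: e1.
  by rewrite mulrBr !mulrA => ->; rewrite subrr.
by case: (utumi_prime qRbr) => // /eqP; rewrite subr_eq0 => /eqP ->.
Qed.

Lemma identity_pu_aub_uq {p q a b : U} :
  (forall u, R u -> p * u + a * u * b + u * q = 0) -> ext_centroid a \/ ext_centroid b.
Proof.
move=> paqb; have [[_ _ Rmul] _ _ _] := utumiR.
have [aC|aNC] := classic (ext_centroid a); [by left | right].
have [s Rs as_neq] := ext_centroidPn aNC.
apply: ext_centroid_of_commR => r Rr.
set cb := r * b - b * r; set cq := r * q - q * r.
have aRcb u : R u -> a * u * cb + u * cq = 0.
  move=> Ru; have e1 := paqb _ (Rmul _ _ Ru Rr).
  have e2 : (p * u + a * u * b + u * q) * r = 0 by rewrite paqb ?mul0r.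
  rewrite !mulrDl -!addrA in e2; rewrite !mulrA -!addrA -{}e2 in e1.
  move/addrI: e1.
  by rewrite !mulrBr !mulrA addrACA -opprD => ->; rewrite subrr.
have asRcb u : R u -> (a * s - s * a) * u * cb = 0.
  move=> Ru; have e1 := aRcb _ (Rmul _ _ Rs Ru).
  have e2 : s * (a * u * cb + u * cq) = 0 by rewrite aRcb ?mulr0.
  rewrite mulrDr !mulrA in e2; rewrite !mulrA -{}e2 in e1; move/addIr: e1.
  by rewrite !mulrBl => ->; rewrite subrr.
by case: (utumi_prime asRcb) => /eqP; rewrite subr_eq0 => /eqP.
Qed.

Lemma identity_of_fp_zero {n'} {alpha : 'S_n'.+1 -> U} {s} {a1 a2 a3 a4 a5 a6 : U} :
  ext_centroid (alpha s) -> alpha s <> 0 ->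
  fp_zero (identity_gsum alpha a1 a2 a3 a4 a5 a6) ->
  forall u v, a1 * u * v + a2 * u * a3 * v + u * a5 * v * a6 + u * a4 * v
                - a5 * u * v * a6 = 0.
Proof.
move=> sC s_neq0 fp0 u v.
have interp0 := gsum_interp_fp_zero scalar_mx (cycle_var s u v)
  (raddfD _) (@scalar_mxM _ _) (fun c _ => scalar_mx_centroid_comm c _) _ fp0.
have := row_delta_identity_cycle alpha s u v a1 a2 a3 a4 a5 a6 sC.
rewrite interp0 -mulrA => /row_delta0_eq0 /(ext_centroid_mul_eq0 sC) [//|].
by case/(ext_centroid_mul_eq0 sC).
Qed.

Lemma quad_identity_centroid {a1 a2 a3 a4 a5 a6 : U} :
  (forall u v, a1 * u * v + a2 * u * a3 * v + u * a5 * v * a6 + u * a4 * v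
                 - a5 * u * v * a6 = 0) ->
  [\/ ext_centroid a2 /\ ext_centroid a5, ext_centroid a2 /\ ext_centroid a6,
      ext_centroid a3 /\ ext_centroid a5 | ext_centroid a3 /\ ext_centroid a6].
Proof.
move=> quad0.
have lin0 u v : (a1 * u + a2 * u * a3 + u * a4) * v + (u * a5 - a5 * u) * v * a6 = 0.
  by rewrite -(quad0 u v) !mulrDl !mulNr !addrA; congr (_ - _); rewrite addrAC.
have a56 : ext_centroid a5 \/ ext_centroid a6.
  have [a6C|a6NC] := classic (ext_centroid a6); [by right | left].
  apply: ext_centroid_of_commR => r _.
  by case: (identity_pv_qvb (fun v _ => lin0 r v)) => // /eqP; rewrite subr_eq0 => /eqP.
have a23 : ext_centroid a2 \/ ext_centroid a3.
  case: a56 => [a5C | a6C].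
    apply: (@identity_pu_aub_uq a1 a4) => u _; apply: annihilator_R_eq0 => v _.
    by have := lin0 u v; rewrite a5C subrr !mul0r addr0.
  apply: (@identity_pu_aub_uq (a1 - a5 * a6) (a4 + a5 * a6)) => u _.
  apply: annihilator_R_eq0 => v _.
  rewrite -(lin0 u v) -[(_ - _) * v * a6]mulrA -(a6C v) mulrA -mulrDl; congr (_ * v).
  rewrite !mulrBl mulrDr -[a5 * u * a6]mulrA -(a6C u) !mulrA !addrA.
  by rewrite (addrAC (a1 * u)) (addrAC _ (- _) (u * a4)) (addrAC _ (- _) (u * a5 * a6)).
by case: a23 => ?; case: a56 => ?; [apply: Or41 | apply: Or42 | apply: Or43 | apply: Or44].
Qed.

End PrimeUtumi.

Lemma is_GPI_identity_gsum {U : nzRingType} {R : U -> Prop} {n'} {alpha : 'S_n'.+1 -> U}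
    {a1 a2 a3 a4 a5 a6 : U} :
  (forall z : 'I_n'.+1 -> U, (forall i, R (z i)) ->
     let f := mlin_eval alpha z in
     a1 * f * f + a2 * f * a3 * f + f * a5 * f * a6 + f * a4 * f - a5 * f * f * a6 = 0) ->
  is_GPI R (identity_gsum alpha a1 a2 a3 a4 a5 a6).
Proof.
move=> fid x Rx; have := fid (fun i => x i) (fun i => Rx i).
rewrite -[mlin_eval _ _]/(mlin_interp alpha id x) => /= <-.
exact: (interp_identity_gsum alpha id x).
Qed.

Lemma mlin_eval0_ext_centroid {U : nzRingType} (alpha : 'S_0 -> U) z :
  (forall s, ext_centroid (alpha s)) -> ext_centroid (mlin_eval alpha z).
Proof.
move=> alphaC; apply: (big_ind (@ext_centroid U)) => [w | c d cC dC w | s _].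
- by rewrite mul0r mulr0.
- by rewrite mulrDl mulrDr cC dC.
- by rewrite big_ord0 mulr1.
Qed.

Lemma mlin_eval_coef_neq0 {U : nzRingType} {n} {alpha : 'S_n -> U} {z} :
  ~ ext_centroid (mlin_eval alpha z) -> exists s, alpha s <> 0.
Proof.
move=> fNC; apply: NNPP => alpha0; apply: fNC.
rewrite /mlin_eval big1 => [w | s _]; first by rewrite mul0r mulr0.
suff -> : alpha s = 0 by rewrite mul0r.
by apply: NNPP => ?; apply: alpha0; exists s.
Qed.

Theorem lemma3 (U : nzRingType) (R : U -> Prop) (n : nat) (alpha : 'S_n -> U)
    (a1 a2 a3 a4 a5 a6 : U) :
  is_utumi_quotient R ->
  prime_ring R ->
  (exists x y, [/\ R x, R y & x * y <> y * x]) ->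
  (exists x, R x /\ x + x <> 0) ->
  (forall s, ext_centroid (alpha s)) ->
  (exists z : 'I_n -> U, (forall i, R (z i)) /\ ~ ext_centroid (mlin_eval alpha z)) ->
  (forall z : 'I_n -> U, (forall i, R (z i)) ->
     let f := mlin_eval alpha z in
     a1 * f * f + a2 * f * a3 * f + f * a5 * f * a6 + f * a4 * f
       - a5 * f * f * a6 = 0) ->
  no_nontrivial_GPI R ->
  [\/ ext_centroid a2 /\ ext_centroid a5, ext_centroid a2 /\ ext_centroid a6,
      ext_centroid a3 /\ ext_centroid a5 | ext_centroid a3 /\ ext_centroid a6].
Proof.
move=> utumiR primeR _ _ alphaC [z [_ fNC]] fid noGPI.
case: n alpha z fNC fid alphaC => [|n'] alpha z fNC fid alphaC.
  by case: fNC; apply: mlin_eval0_ext_centroid.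
have [s s_neq0] := mlin_eval_coef_neq0 fNC.
have fp0 := noGPI _ (is_GPI_identity_gsum fid).
have quad0 := identity_of_fp_zero utumiR primeR (alphaC s) s_neq0 fp0.
exact (quad_identity_centroid utumiR primeR quad0).
Qed.
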